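(* Let $M$ be a matroid on a nonempty finite set $S$. Then $M$ is irreducible with respect to free product if and only if $M$ has no free separator other than $\emptyset$ and $S$.
   Context: For a matroid $M$ on $S$ write $\rho_M$ for its rank function, $\rho(M)=\rho_M(S)$, $\nu_M(A)=|A|-\rho_M(A)$, $\lambda_M(A)=\rho(M)-\rho_M(A)$. For matroids $M$ on $S$ and $N$ on $T$ with $S\cap T=\emptyset$, the free product $M\mathbin{\Box} N$ is the matroid on $S\cup T$ whose independent sets are those $A$ with $A\cap S$ independent in $M$ and $\lambda_M(A\cap S)\geq\nu_N(A\cap T)$; it is associative. A nonempty matroid $M$ is irreducible if every factorization of $M$ as a free product of matroids contains $M$ itself as a factor. A cyclic flat is a flat that is a union of circuits. A subset $A\subseteq S$ is a free separator of $M$ if every cyclic flat of $M$ is comparable to $A$ by inclusion. *)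

From mathcomp Require Import all_boot.
Set Implicit Arguments. Unset Strict Implicit. Unset Printing Implicit Defensive.

Record setsys (T : finType) := SetSys { ground : {set T}; indep : {set T} -> bool }.

Section Defs.
Variable T : finType.
Implicit Types (M N : setsys T) (A B X : {set T}).

Definition rank M A : nat := \max_(B : {set T} | (B \subset A) && indep M B) #|B|.
Definition rk M : nat := rank M (ground M).
Definition nullity M A : nat := #|A| - rank M A.
Definition lambda M A : nat := rk M - rank M A.

Definition is_matroid M : Prop :=
  [/\ (forall A, indep M A -> A \subset ground M),
      indep M set0,
      (forall A B, B \subset A -> indep M A -> indep M B) &
      (forall A B, indep M A -> indep M B -> #|A| < #|B| ->
         exists2 x, x \in B :\: A & indep M (x |: A))].

(* free product M [] N (ground sets intended disjoint) *)
Definition fprod M N : setsys T :=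
  SetSys (ground M :|: ground N)
    (fun A => [&& A \subset ground M :|: ground N,
                  indep M (A :&: ground M) &
                  nullity N (A :&: ground N) <= lambda M (A :&: ground M)]).

Definition emptysys : setsys T := SetSys set0 (fun A => A == set0).

Definition same M N : Prop := ground M = ground N /\ forall A, indep M A = indep N A.

Definition circuit M A : Prop :=
  [/\ A \subset ground M, ~~ indep M A & forall B, B \proper A -> indep M B].
Definition flat M A : Prop :=
  A \subset ground M /\ forall x, x \in ground M :\: A -> rank M A < rank M (x |: A).
Definition cyclic M A : Prop :=
  forall x, x \in A -> exists C, [/\ circuit M C, x \in C & C \subset A].
Definition cyclic_flat M A : Prop := flat M A /\ cyclic M A.

Definition free_separator M A : Prop :=
  A \subset ground M /\ forall F, cyclic_flat M F -> F \subset A \/ A \subset F.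
End Defs.

Record matroid (T : finType) := Matroid { msys :> setsys T; matroidP : is_matroid msys }.

(* Ms is a factorization of M: pairwise disjoint factors whose free product
   N1 [] (N2 [] (... [] Nk)) is M (well-defined by associativity). *)
Definition factorization (T : finType) (M : matroid T) (Ms : seq (matroid T)) : Prop :=
  pairwise (fun N1 N2 : matroid T => [disjoint ground N1 & ground N2]) Ms /\
  same M (foldr (@fprod T) (emptysys T) (map (@msys T) Ms)).

Definition irreducible (T : finType) (M : matroid T) : Prop :=
  ground M != set0 /\
  forall Ms, factorization M Ms -> exists2 i, i < size Ms & same M (nth M Ms i).

From Pilot Require Import Defs.
From mathcomp Require Import all_boot zify.
From Stdlib Require Import FunctionalExtensionality.
Set Implicit Arguments. Unset Strict Implicit. Unset Printing Implicit Defensive.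

(* In a free product N [] R the ground set of N is a free separator: if a cyclic
   flat F contained an element x of R but missed an element y of N, then for a
   basis B of F the set y + B would be independent (F is a flat), and in a free
   product an element of N can be traded for one of R, so x + B would be
   independent too, although x lies in a circuit inside F.  Hence a matroid with
   only trivial free separators has only trivial factorizations.
   Conversely, if A is a free separator with basis B, then M = M|A [] (M/B)|(S-A).
   Independence in this product means that X :&: A is independent and
   #|X| <= r(X :|: A); a dependent such X would contain a circuit C whose span is
   a cyclic flat, hence comparable with A, and either inclusion is absurd. *)

Section SetSystem.
Variable T : finType.
Implicit Types (M N : setsys T) (B X Y : {set T}).

Definition is_basis M X B : Prop := [/\ B \subset X, indep M B & #|B| = rank M X].

Lemma rank_leq_card M X : rank M X <= #|X|.
Proof. by apply/bigmax_leqP => B /andP[sBX _]; apply: subset_leq_card. Qed.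

Lemma indep_leq_rank M X B : B \subset X -> indep M B -> #|B| <= rank M X.
Proof.
move=> sBX iB.
by apply: (@leq_bigmax_cond _ (fun C : {set T} => (C \subset X) && indep M C)); rewrite sBX.
Qed.

Lemma rankS M X Y : X \subset Y -> rank M X <= rank M Y.
Proof.
move=> sXY; apply/bigmax_leqP => B /andP[sBX iB].
exact: indep_leq_rank (subset_trans sBX sXY) iB.
Qed.

Lemma rank_indep M X : indep M X -> rank M X = #|X|.
Proof. by move=> iX; apply/eqP; rewrite eqn_leq rank_leq_card indep_leq_rank. Qed.

Lemma exists_basis M X : indep M set0 -> exists B, is_basis M X B.
Proof.
move=> i0; pose P := [pred C : {set T} | (C \subset X) && indep M C].
have : 0 < #|P| by apply/card_gt0P; exists set0; rewrite inE sub0set.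
case/(eq_bigmax_cond (fun C : {set T} => #|C|)) => B /andP[sBX iB] rkX.
by exists B; split; rewrite // /rank -rkX.
Qed.

Lemma rank_indepP M X : indep M set0 -> reflect (#|X| <= rank M X) (indep M X).
Proof.
move=> i0; apply: (iffP idP) => [iX | le]; first by rewrite rank_indep.
have [B [sBX iB rkX]] := exists_basis X i0.
suff <- : B = X by [].
by apply/eqP; rewrite eqEcard sBX rkX.
Qed.

Lemma basis_setU1_rank M X B x :
  is_basis M X B -> x \notin B -> indep M (x |: B) -> rank M X < rank M (x |: X).
Proof.
case=> sBX _ rkX xB ixB; rewrite -rkX.
by have := indep_leq_rank (setUS [set x] sBX) ixB; rewrite cardsU1 xB add1n.
Qed.

Lemma nullity_setU1 M x X : nullity M (x |: X) <= (nullity M X).+1.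
Proof.
have := rankS M (subsetUr [set x] X); have := rank_leq_card M X.
rewrite /nullity cardsU1; case: (x \in X) => /=; lia.
Qed.

Lemma same_eq M N : same M N -> M = N.
Proof.
case: M N => [gM iM] [gN iN] [/= -> eqi]; congr SetSys.
exact: functional_extensionality.
Qed.

End SetSystem.

Section Matroid.
Variables (T : finType) (M : setsys T).
Hypothesis matroidM : is_matroid M.
Implicit Types (A B C D E I X Y : {set T}).

Lemma indep_sub_ground X : indep M X -> X \subset ground M.
Proof. by case: matroidM => sub _ _ _; apply: sub. Qed.

Lemma indep0 : indep M set0.
Proof. by case: matroidM. Qed.

Lemma indepS X Y : X \subset Y -> indep M Y -> indep M X.
Proof. by case: matroidM => _ _ hered _; apply: hered. Qed.

Lemma indep_augment X Y : indep M X -> indep M Y -> #|X| < #|Y| ->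
  exists2 y, y \in Y :\: X & indep M (y |: X).
Proof. by case: matroidM => _ _ _ aug; apply: aug. Qed.

Lemma dependent_rank X : ~~ indep M X -> rank M X < #|X|.
Proof. by rewrite ltnNge => /(rank_indepP _ indep0)/negP. Qed.

Lemma basis_extend I X : I \subset X -> indep M I ->
  exists2 B : {set T}, I \subset B & is_basis M X B.
Proof.
move=> sIX iI; pose P B := [&& I \subset B, B \subset X & indep M B].
have PI : P I by rewrite /P subxx sIX.
have [B /maxsetP[/and3P[sIB sBX iB] maxB] _] := maxset_exists PI.
exists B => //; split=> //; apply/eqP; rewrite eqn_leq indep_leq_rank // leqNgt.
apply/negP => ltB; have [W [sWX iW rkW]] := exists_basis X indep0.
have [y /setDP[yW yB] iyB] : exists2 y, y \in W :\: B & indep M (y |: B).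
  by apply: indep_augment; rewrite ?rkW.
have Py : P (y |: B).
  by rewrite /P iyB subUset sub1set (subsetP sWX) // sBX (subset_trans sIB) ?subsetUr.
by move: yB; rewrite -(maxB _ Py (subsetUr _ _)) setU11.
Qed.

Lemma basis_augment B X Y : is_basis M X B -> X \subset Y -> rank M X < rank M Y ->
  exists2 z, z \in Y :\: X & indep M (z |: B).
Proof.
case=> sBX iB rkB sXY ltXY; have [W [sWY iW rkW]] := exists_basis Y indep0.
have [z /setDP[zW zB] izB] : exists2 z, z \in W :\: B & indep M (z |: B).
  by apply: indep_augment; rewrite ?rkW ?rkB.
exists z => //; rewrite inE (subsetP sWY) // andbT; apply/negP => zX.
have := basis_setU1_rank (And3 sBX iB rkB) zB izB.
by rewrite (setUidPr _) ?sub1set // ltnn.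
Qed.

Definition span X := [set e in ground M | rank M (e |: X) == rank M X].

Lemma span_sub_ground X : span X \subset ground M.
Proof. by apply/subsetP => e; rewrite inE => /andP[]. Qed.

Lemma span_rank X e : e \in span X -> rank M (e |: X) = rank M X.
Proof. by rewrite inE => /andP[_ /eqP]. Qed.

Lemma sub_span X : X \subset ground M -> X \subset span X.
Proof.
move=> sX; apply/subsetP => x xX.
by rewrite inE (subsetP sX) //= (setUidPr _) // sub1set.
Qed.

Lemma basis_setU1_span B X e :
  is_basis M X B -> e \in span X -> e \notin B -> ~~ indep M (e |: B).
Proof.
move=> basB eX eB; apply/negP => /(basis_setU1_rank basB eB).
by rewrite span_rank // ltnn.
Qed.

Lemma rank_setU_span X E : E \subset span X -> rank M (X :|: E) = rank M X.
Proof.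
move=> sE; have [B basB] := exists_basis X indep0; have [sBX _ _] := basB.
apply/eqP; rewrite eqn_leq leqNgt rankS ?subsetUl // andbT; apply/negP => lt.
have [z /setDP[zXE zX] izB] := basis_augment basB (subsetUl X E) lt.
have zE : z \in E by move: zXE; rewrite inE (negbTE zX).
have zB : z \notin B by apply: contra zX; apply: (subsetP sBX).
by move: izB; apply/negP; apply: basis_setU1_span basB (subsetP sE z zE) zB.
Qed.

Lemma spanS X Y : X \subset Y -> span X \subset span Y.
Proof.
move=> sXY; apply/subsetP => e eX.
rewrite inE (subsetP (span_sub_ground X)) //=.
have [BX basBX] := exists_basis X indep0; have [sBX iBX _] := basBX.
have [B sBXB basB] := basis_extend (subset_trans sBX sXY) iBX.
rewrite eqn_leq leqNgt rankS ?subsetUr // andbT; apply/negP => lt.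
have [z /setDP[zeY zY] izB] := basis_augment basB (subsetUr _ _) lt.
have ze : z = e by case/setU1P: zeY => // zY'; rewrite zY' in zY.
subst z.
have eBX : e \notin BX by apply: contra zY => /(subsetP sBX)/(subsetP sXY).
by move: (basis_setU1_span basBX eX eBX); rewrite (indepS _ izB) ?setUS.
Qed.

Lemma span_basis A B : A \subset ground M -> is_basis M A B -> A \subset span B.
Proof.
move=> sA [sBA iB rkB]; apply/subsetP => a aA; rewrite inE (subsetP sA) //=.
rewrite eqn_leq [rank M B <= _]rankS ?subsetUr // andbT (rank_indep iB) rkB.
by apply: rankS; rewrite subUset sub1set aA.
Qed.

Lemma rank_setU_basis A B Y : A \subset ground M -> is_basis M A B ->
  rank M (Y :|: A) = rank M (Y :|: B).
Proof.
move=> sA basB; have [sBA _ _] := basB.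
have sAspan : A \subset span (Y :|: B).
  exact: subset_trans (span_basis sA basB) (spanS (subsetUr Y B)).
by rewrite -(rank_setU_span sAspan) -setUA (setUidPr sBA).
Qed.

Lemma dependent_circuit X : X \subset ground M -> ~~ indep M X ->
  exists2 C, circuit M C & C \subset X.
Proof.
move=> sX dX; pose P := [pred D | ~~ indep M D].
have [C /minsetP[dC minC] sCX] := minset_exists (P := P) dX.
exists C => //; split=> //; first exact: subset_trans sCX sX.
move=> D /andP[sDC nsCD]; apply/negPn/negP => dD.
by rewrite (minC D dD sDC) subxx in nsCD.
Qed.

Lemma circuit_through C e : circuit M C -> e \in span C -> e \notin C ->
  exists D, [/\ circuit M D, e \in D & D \subset e |: C].
Proof.
case=> sC dC indepC eC eNC.
have [c cC] : exists c, c \in C by apply/set0Pn; apply: contraNneq dC => ->; apply: indep0.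
have iCc : indep M (C :\ c) by apply: indepC; apply: properD1.
have eCc : e \notin C :\ c by rewrite inE negb_and eNC orbT.
have dD0 : ~~ indep M (e |: C :\ c).
  apply/negP => iD0; have := rankS M (setUS [set e] (subD1set C c)).
  have := dependent_rank dC; have := cardsD1 c C.
  by rewrite (rank_indep iD0) (span_rank eC) cardsU1 eCc cC; lia.
have sD0 : e |: C :\ c \subset ground M.
  rewrite subUset sub1set (subsetP (span_sub_ground C)) //.
  exact: subset_trans (subD1set C c) sC.
have [D cD sDD0] := dependent_circuit sD0 dD0; have [_ dD _] := cD.
exists D; split; rewrite ?(subset_trans sDD0) ?setUS ?subD1set //.
apply: contraLR dD => eD; rewrite negbK (indepS _ iCc) //.
apply/subsetP => d dD; have /setU1P[deq | //] := subsetP sDD0 d dD.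
by rewrite -deq dD in eD.
Qed.

Lemma span_flat X : X \subset ground M -> flat M (span X).
Proof.
move=> sX; split=> [|x /setDP[xg xNS]]; first exact: span_sub_ground.
have rk_span : rank M (span X) = rank M X.
  by rewrite -{1}(setUidPr (sub_span sX)) rank_setU_span.
have ltX : rank M X < rank M (x |: X).
  rewrite inE xg /= in xNS.
  by rewrite ltn_neqAle eq_sym xNS rankS ?subsetUr.
by rewrite rk_span (leq_trans ltX) ?rankS ?setUS ?sub_span.
Qed.

Lemma span_circuit_cyclic_flat C : circuit M C -> cyclic_flat M (span C).
Proof.
move=> cC; have [sC _ _] := cC; have sCS := sub_span sC.
split=> [|e eS]; first exact: span_flat.
case: (boolP (e \in C)) => eC; first by exists C.
have [D [cD eD sD]] := circuit_through cC eS eC.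
by exists D; split; rewrite // (subset_trans sD) // subUset sub1set eS.
Qed.

Lemma indep_free_separatorE A X : free_separator M A ->
  indep M X = [&& X \subset ground M, indep M (X :&: A) & #|X| <= rank M (X :|: A)].
Proof.
case=> _ sepA; apply/idP/and3P => [iX | [sX iXA rkXA]].
  split; [exact: indep_sub_ground | exact: indepS (subsetIl X A) iX |].
  by rewrite -(rank_indep iX) rankS ?subsetUl.
apply/negPn/negP => dX; have [C cC sCX] := dependent_circuit sX dX.
have [sC dC _] := cC.
case: (sepA _ (span_circuit_cyclic_flat cC)) => [sSA | sAS].
  apply/negP: dC; rewrite negbK (indepS _ iXA) // subsetI sCX.
  exact: subset_trans (sub_span sC) sSA.
have sASX : A \subset span X := subset_trans sAS (spanS sCX).
by move: rkXA; rewrite (rank_setU_span sASX) leqNgt dependent_rank.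
Qed.

End Matroid.

Section FreeProduct.
Variable T : finType.
Implicit Types (N R : setsys T) (A B X : {set T}).

Lemma setU1I_in x B A : x \in A -> (x |: B) :&: A = x |: (B :&: A).
Proof. by move=> xA; rewrite setIUl (setIidPl _) // sub1set. Qed.

Lemma setU1I_notin x B A : x \notin A -> (x |: B) :&: A = B :&: A.
Proof. by move=> xA; rewrite setIUl disjoint_setI0 ?disjoints1 ?set0U. Qed.

Lemma fprod_exchange N R B x y :
  indep (Defs.fprod N R) B -> indep (Defs.fprod N R) (y |: B) ->
  y \in ground N :\: ground R -> y \notin B -> x \in ground R :\: ground N ->
  indep (Defs.fprod N R) (x |: B).
Proof.
(* y raises the rank of the N-part by one, x raises the nullity of the R-part by at most one *)
move=> /and3P[sB iBN _] /and3P[_ iyBN nullBR] /setDP[yN yNR] yB /setDP[xR xNN].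
rewrite /= subUset sub1set inE xR orbT sB /=.
rewrite setU1I_in // setU1I_notin // in iyBN nullBR.
rewrite setU1I_notin // setU1I_in // iBN /=.
have yBN : y \notin B :&: ground N by rewrite inE (negbTE yB).
have rkyBN : rank N (y |: B :&: ground N) <= rk N.
  by rewrite rankS // subUset sub1set yN subsetIr.
have := nullity_setU1 R x (B :&: ground R).
move: nullBR rkyBN; rewrite /lambda (rank_indep iBN) (rank_indep iyBN) cardsU1 yBN; lia.
Qed.

Lemma fprod_free_separator N R : is_matroid (Defs.fprod N R) ->
  [disjoint ground N & ground R] -> free_separator (Defs.fprod N R) (ground N).
Proof.
set M := Defs.fprod N R => matM disNR.
split=> [|F [[sF flatF] cycF]]; first exact: subsetUl.
have [sFN | /subsetPn[x xF xNN]] := boolP (F \subset ground N); [by left | right].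
have xR : x \in ground R by move: (subsetP sF x xF); rewrite inE (negbTE xNN).
apply/subsetP => y yN; apply/negPn/negP => yNF.
have [C [[_ dC indepC] xC sCF]] := cycF x xF.
have iCx : indep M (C :\ x) by apply: indepC; apply: properD1.
have [B sCxB basB] := basis_extend matM (subset_trans (subD1set C x) sCF) iCx.
have [sBF iB _] := basB.
have xspan : x \in span M F by apply: (subsetP (sub_span sF)).
have xB : x \notin B.
  apply: contra dC => xB; rewrite (indepS matM _ iB) //.
  by rewrite -(setD1K xC) subUset sub1set xB.
have yF : y \in ground M :\: F by rewrite !inE yNF yN.
have [z /setDP[zyF zF] iyB] := basis_augment matM basB (subsetUr [set y] F) (flatF y yF).
have zy : z = y by case/setU1P: zyF => // zF'; rewrite zF' in zF.
subst z.
have yNR : y \in ground N :\: ground R by rewrite inE yN (disjointFr disNR yN).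
have yB : y \notin B by apply: contra yNF; apply: (subsetP sBF).
have xRN : x \in ground R :\: ground N by rewrite inE xR xNN.
by move: (basis_setU1_span basB xspan xB); rewrite (fprod_exchange iB iyB yNR yB xRN).
Qed.

Lemma fprod_ground0l N R : ground N = set0 -> indep N set0 -> indep R set0 ->
  (forall X, indep R X -> X \subset ground R) -> Defs.fprod N R = R.
Proof.
move=> gN0 iN0 iR0 subR; apply: same_eq; split=> [|X] /=; first by rewrite gN0 set0U.
rewrite gN0 set0U setI0 iN0 /lambda /rk gN0 subnn /=.
apply/andP/idP => [[sX] | iX].
  by rewrite (setIidPl sX) /nullity leqn0 subn_eq0 => /(rank_indepP _ iR0).
by rewrite subR // (setIidPl (subR _ iX)) /nullity (rank_indep iX) subnn.
Qed.

Lemma fprod_ground0r N R : ground R = set0 ->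
  (forall X, indep N X -> X \subset ground N) -> Defs.fprod N R = N.
Proof.
move=> gR0 subN; apply: same_eq; split=> [|X] /=; first by rewrite gR0 setU0.
rewrite gR0 setU0 setI0 /nullity cards0 sub0n /= andbT.
apply/andP/idP => [[sX] | iX]; first by rewrite (setIidPl sX).
by rewrite subN // (setIidPl (subN _ iX)).
Qed.

End FreeProduct.

Section RestrictContract.
Variables (T : finType) (M : setsys T).
Hypothesis matroidM : is_matroid M.
Implicit Types (A B D J X Y : {set T}).

Definition restrict A := SetSys A (fun X => (X \subset A) && indep M X).

(* (M / B) | D; for a basis B of A and D = ground M :\: A this is M / A *)
Definition contract D B := SetSys D (fun J => (J \subset D) && indep M (J :|: B)).

Lemma restrict_matroid A : is_matroid (restrict A).
Proof.
split=> /= [X /andP[] // | | X Y sXY /andP[sY iY] | X Y /andP[sX iX] /andP[sY iY] ltXY].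
- by rewrite sub0set indep0.
- by rewrite (subset_trans sXY sY) (indepS matroidM sXY iY).
have [y yYX iyX] := indep_augment matroidM iX iY ltXY.
exists y => //; rewrite iyX andbT subUset sX andbT sub1set.
by case/setDP: yYX => /(subsetP sY).
Qed.

Lemma rank_restrict A X : X \subset A -> rank (restrict A) X = rank M X.
Proof.
move=> sXA; apply: eq_bigl => Y /=.
by case sYX: (Y \subset X); rewrite //= (subset_trans sYX sXA).
Qed.

Variables (D B : {set T}).
Hypotheses (iB : indep M B) (disDB : [disjoint D & B]).

Lemma cardsU_contract J : J \subset D -> #|J :|: B| = #|J| + #|B|.
Proof. by move=> sJD; apply/eqP; rewrite (leq_card_setU J B).2 (disjointWl sJD disDB). Qed.

Lemma contract_matroid : is_matroid (contract D B).
Proof.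
split=> /= [X /andP[] // | | X Y sXY /andP[sY iY] | X Y /andP[sX iX] /andP[sY iY] ltXY].
- by rewrite sub0set set0U.
- by rewrite (subset_trans sXY sY) (indepS matroidM _ iY) ?setSU.
have ltXYB : #|X :|: B| < #|Y :|: B| by rewrite !cardsU_contract // ltn_add2r.
have [y /setDP[yYB yXB] iyXB] := indep_augment matroidM iX iY ltXYB.
move: yXB yYB; rewrite !inE negb_or => /andP[yX yB] /orP[yY | /(negP yB)//].
exists y; first by rewrite inE yX yY.
by rewrite subUset sub1set (subsetP sY) //= sX -setUA.
Qed.

Lemma rank_contract Y : Y \subset D -> rank (contract D B) Y + #|B| = rank M (Y :|: B).
Proof.
move=> sYD; apply/eqP; rewrite eqn_leq; apply/andP; split.
  have [J [sJY /andP[_ iJB] <-]] := exists_basis Y (indep0 contract_matroid).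
  by rewrite -cardsU_contract ?(subset_trans sJY) // indep_leq_rank ?setSU.
have [B' sBB' [sB'YB iB' <-]] := basis_extend matroidM (subsetUr Y B) iB.
have sB'B : B' :\: B \subset Y.
  by apply/subsetP => x /setDP[/(subsetP sB'YB)/setUP[] // xB' /negP].
have eB' : B' :\: B :|: B = B' by rewrite setUC -{2}(setID B' B) (setIidPr sBB').
rewrite -eB' cardsU_contract ?(subset_trans sB'B) // leq_add2r.
by apply: (indep_leq_rank sB'B); rewrite /= (subset_trans sB'B) // eB'.
Qed.

End RestrictContract.

Section FreeSeparatorFactorization.
Variables (T : finType) (M : setsys T) (A B : {set T}).
Hypotheses (matroidM : is_matroid M) (sA : A \subset ground M) (basB : is_basis M A B).

Lemma setU_setD_ground : A :|: (ground M :\: A) = ground M.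
Proof. by apply/setP => t; rewrite !inE; case: (boolP (t \in A)) => //= /(subsetP sA) ->. Qed.

Lemma disjoint_setD_basis : [disjoint ground M :\: A & B].
Proof.
have [sBA _ _] := basB; rewrite disjoint_sym disjoints_subset.
by apply/subsetP => b /(subsetP sBA) bA; rewrite !inE bA.
Qed.

Lemma indep_fprod_restrict_contract X :
  indep (Defs.fprod (restrict M A) (contract M (ground M :\: A) B)) X =
  [&& X \subset ground M, indep M (X :&: A) & #|X| <= rank M (X :|: A)].
Proof.
(* r_{M/B}(X :\: A) + #|B| = r(X :|: A) turns the nullity condition into #|X| <= r(X :|: A) *)
have [sBA iB rkA] := basB.
rewrite /= setU_setD_ground subsetIr /=.
case sX: (X \subset ground M) => //=; case iXA: (indep M (X :&: A)) => //=.
rewrite setIDA (setIidPl sX).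
have rkC := rank_contract matroidM iB disjoint_setD_basis (setSD A sX).
have rkXA : rank M (X :|: A) = rank M ((X :\: A) :|: B).
  rewrite -(rank_setU_basis matroidM _ sA basB); congr (rank M _).
  by apply/setP => t; rewrite !inE; case: (t \in A); rewrite ?orbT ?orbF.
have leXA : #|X :&: A| <= #|B| by rewrite rkA indep_leq_rank ?subsetIr.
have leC := rank_leq_card (contract M (ground M :\: A) B) (X :\: A).
have cardX := cardsID A X.
rewrite /nullity /lambda /rk /= !rank_restrict ?subsetIr // -rkA (rank_indep iXA).
by apply/idP/idP; lia.
Qed.

Lemma fprod_restrict_contract : free_separator M A ->
  Defs.fprod (restrict M A) (contract M (ground M :\: A) B) = M.
Proof.
move=> sepA; apply: same_eq; split=> [|X]; first exact: setU_setD_ground.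
by rewrite indep_fprod_restrict_contract (indep_free_separatorE matroidM X sepA).
Qed.

End FreeSeparatorFactorization.

Section Factorization.
Variable T : finType.
Implicit Types (M N : matroid T) (Ms : seq (matroid T)) (A X : {set T}).

Definition fprods Ms : setsys T := foldr (@Defs.fprod T) (emptysys T) (map (@msys T) Ms).

Definition trivial_free_separators (M : setsys T) : Prop :=
  forall A, free_separator M A -> A = set0 \/ A = ground M.

Lemma fprods_sub Ms X : indep (fprods Ms) X -> X \subset ground (fprods Ms).
Proof. by case: Ms => [/eqP -> | N Ms /and3P[]]. Qed.

Lemma fprods0 Ms : indep (fprods Ms) set0.
Proof.
case: Ms => [|N Ms] //=.
by rewrite sub0set !set0I (indep0 (matroidP N)) /nullity cards0.
Qed.

Lemma disjoint_fprods N Ms : all (fun N' => [disjoint ground N & ground N']) Ms ->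
  [disjoint ground N & ground (fprods Ms)].
Proof.
elim: Ms => [|N' Ms IH] /=; first by rewrite -setI_eq0 setI0.
by case/andP => disN' /IH; move: disN'; rewrite -!setI_eq0 setIUr setU_eq0 => -> ->.
Qed.

Lemma free_separator_factorization M A : free_separator M A ->
  exists MA MC : matroid T,
    [/\ factorization M [:: MA; MC], ground MA = A & ground MC = ground M :\: A].
Proof.
move=> sepA; have [sA _] := sepA; have matM := matroidP M.
have [B basB] := exists_basis A (indep0 matM); have [_ iB _] := basB.
pose MA := Matroid (restrict_matroid matM A).
pose MC := Matroid (contract_matroid matM iB (disjoint_setD_basis basB)).
exists MA, MC; split=> //; split.
  by rewrite /= !andbT disjoints_subset; apply/subsetP => t; rewrite !inE => ->.
rewrite /= (@fprod_ground0r _ _ (emptysys T)) //; last by move=> X /andP[].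
by rewrite (fprod_restrict_contract matM sA basB sepA).
Qed.

Lemma factor_of_trivial_free_separators (d : matroid T) Ms (M : setsys T) :
  is_matroid M -> ground M != set0 -> trivial_free_separators M ->
  pairwise (fun N1 N2 : matroid T => [disjoint ground N1 & ground N2]) Ms ->
  M = fprods Ms -> exists2 i, i < size Ms & same M (nth d Ms i).
Proof.
elim: Ms M => [|N Ms IH] M matM neM sepM; first by move=> _ eM; rewrite eM eqxx in neM.
case/andP => disN pwMs; have -> : fprods (N :: Ms) = Defs.fprod N (fprods Ms) by [].
move=> eM.
have sepN : free_separator M (ground N).
  by rewrite eM; apply: fprod_free_separator (disjoint_fprods disN); rewrite -eM.
case: (sepM _ sepN) => [gN0 | gNM].
  have eMs : M = fprods Ms.
    by rewrite eM fprod_ground0l ?(indep0 (matroidP N)) ?fprods0 //; apply: fprods_sub.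
  by have [i ltis sameMi] := IH M matM neM sepM pwMs eMs; exists i.+1.
have sMsN : ground (fprods Ms) \subset ground N by rewrite gNM eM; apply: subsetUr.
have gMs0 : ground (fprods Ms) = set0.
  by rewrite -(setIidPr sMsN) disjoint_setI0 // disjoint_fprods.
exists 0 => //=; rewrite eM fprod_ground0r //; last exact: indep_sub_ground (matroidP N).
Qed.

End Factorization.

Unset Implicit Arguments.

Theorem theorem6p4 (T : finType) (M : matroid T) :
  ground M != set0 ->
  (irreducible M <->
   (forall A : {set T}, free_separator M A -> A = set0 \/ A = ground M)).
Proof.
move=> neM; split=> [[_ irrM] A sepA | sepM].
  have [MA [MC [facM gMA gMC]]] := free_separator_factorization sepA.
  have [[|[|i]] // _ [gM _]] := irrM _ facM; first by right; rewrite gM gMA.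
  left; have [sA _] := sepA; apply/setP => a; rewrite inE; apply/negbTE/negP => aA.
  by move: (subsetP sA a aA); rewrite gM /= gMC inE aA.
split=> // Ms [pwMs sameM].
exact: factor_of_trivial_free_separators (matroidP M) neM sepM pwMs (same_eq sameM).
Qed.
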